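(* Let $n\in\mathbb{N}$ and let $a=3$ or $a>5$ (real). Let $E_n(a,1)$ be the $(n+1)\times n$ matrix whose $(i,j)$ entry is $-a$ if $i=j$, $1$ if $j=i+1$, $a$ if $i=j+1$, $-1$ if $i=j+2$, and $0$ otherwise, and let $B_n(a,1)$ be the $(n+3)\times n$ matrix whose first row is $(1,0,\dots,0)$, whose rows $2,\dots,n+2$ are the rows of $E_n(a,1)$ in order, and whose last row is $(0,\dots,0,-1)$. Then the columns of $B_n(a,1)$ are linearly independent, and every non-zero linear combination of these columns has at least $4$ non-zero entries. *)

From HB Require Import structures.
From mathcomp Require Import all_boot all_order all_algebra.
Set Implicit Arguments. Unset Strict Implicit. Unset Printing Implicit Defensive.
Import Order.TTheory GRing.Theory Num.Theory.
Local Open Scope ring_scope.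

(* Entry (i,j) of E_n(a,1), indices 0-based (the relations i=j, j=i+1, i=j+1,
   i=j+2 are invariant under the shift from 1-based indexing). *)
Definition E_entry (R : pzRingType) (a : R) (i j : nat) : R :=
  if i == j then - a
  else if j == i.+1 then 1
  else if i == j.+1 then a
  else if i == j.+2 then -1
  else 0.

Definition Emx (R : pzRingType) (n : nat) (a : R) : 'M[R]_(n.+1, n) :=
  \matrix_(i < n.+1, j < n) E_entry a i j.

Definition Bmx (R : pzRingType) (n : nat) (a : R) : 'M[R]_(n.+3, n) :=
  \matrix_(i < n.+3, j < n)
    if (i : nat) == 0%N then ((j : nat) == 0%N)%:R
    else if (i : nat) == n.+2 then - ((j : nat) == n.-1)%:R
    else Emx n a (inord i.-1) j.

From HB Require Import structures.
From mathcomp Require Import all_boot all_order all_algebra.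
From mathcomp Require Import ring lra zify.
Import Order.TTheory GRing.Theory Num.Theory.
Local Open Scope ring_scope.

(* Reading a column v as the polynomial v(z), B_n(a,1) v lists the
   coefficients of z^3 v(z) (1 - a z + a z^2 - z^3), and
   1 - a z + a z^2 - z^3 = (1 - z) (1 - b z + z^2) with b = a - 1 >= 2
   (only a >= 3 is needed). So the entries of B v are the successive
   differences of the coefficients U of v(z) (1 - b z + z^2). The first and
   the last of them are nonzero; if at most one further entry were nonzero,
   U would equal the first nonzero coefficient of v up to some index and the
   last one after it. Since b >= 2, a coefficient sequence leaving 0 upwards
   keeps increasing as long as U >= 0 (and symmetrically from the right end
   with U <= 0), so it can never come back to 0: both sign patterns are
   impossible. *)

Section Convolution.

Set Implicit Arguments.
Unset Strict Implicit.

Lemma card_lt4_cover N (P : pred nat) e f : e != f ->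
  (forall j, (N <= j)%N -> ~~ P j) -> (#|[set i : 'I_N | P i]| < 4)%N ->
  P e -> P f -> exists m, forall j, P j -> j \in [:: e; f; m].
Proof.
move=> ef outN lt4 Pe Pf.
have ltN j : P j -> (j < N)%N.
  by move=> Pj; rewrite ltnNge; apply: contraL Pj; exact: outN.
set S := [set i : 'I_N | P i] in lt4 *.
pose e' := Ordinal (ltN e Pe); pose f' := Ordinal (ltN f Pf).
set D := S :\: [set e'; f'].
have D_le1 : (#|D| <= 1)%N.
  have ef_S : [set e'; f'] \subset S.
    by apply/subsetP => i; rewrite !inE => /orP[]/eqP->.
  by rewrite cardsD (setIidPr ef_S) cards2 -(inj_eq val_inj) ef; lia.
exists (val (odflt e' [pick i in D])) => j Pj.
pose j' := Ordinal (ltN j Pj).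
have [|j'_D] := boolP (j' \in [set e'; f']).
  by rewrite !inE -!(inj_eq val_inj) => /orP[]/= ->; rewrite ?orbT.
have {}j'_D : j' \in D by rewrite /D in_setD j'_D inE.
case: pickP => [m m_D | /(_ j')]; last by rewrite j'_D.
have /(congr1 val)/= -> := card_le1_eqP D_le1 j' m j'_D m_D.
by rewrite !inE eqxx !orbT.
Qed.

Variable R : realFieldType.
Implicit Types (a b : R) (X : nat -> R).

(* [conv2 b X j] and [conv3 a X j] are the coefficients of z^(j+2) in
   X(z) (1 - b z + z^2) and of z^(j+3) in X(z) (1 - a z + a z^2 - z^3). *)
Definition conv2 b X j := X j.+2 - b * X j.+1 + X j.

Definition conv3 a X j := X j.+3 - a * X j.+2 + a * X j.+1 - X j.

Lemma conv3_telescope a X j :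
  conv3 a X j = conv2 (a - 1) X j.+1 - conv2 (a - 1) X j.
Proof. by rewrite /conv3 /conv2; ring. Qed.

Lemma conv3N a X j : conv3 a (fun t => - X t) j = - conv3 a X j.
Proof. by rewrite /conv3; ring. Qed.

Lemma conv3_eq0 a X j : (forall k, (j <= k <= j.+3)%N -> X k = 0) ->
  conv3 a X j = 0.
Proof. by move=> X0; rewrite /conv3 !X0 ?mulr0 ?subr0 ?addr0 //; lia. Qed.

Lemma conv2_constant a X p q : (p <= q)%N ->
  (forall j, (p <= j < q)%N -> conv3 a X j = 0) ->
  conv2 (a - 1) X q = conv2 (a - 1) X p.
Proof.
move=> le_pq W0; apply/eqP; rewrite -subr_eq0 -telescope_sumr //.
by rewrite big_nat big1 // => j /W0; rewrite conv3_telescope.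
Qed.

Lemma conv2_ge0_pos b X s k : 2 <= b -> X s = 0 -> 0 < X s.+1 ->
  (forall j, (s <= j)%N -> (j.+2 <= k)%N -> 0 <= conv2 b X j) ->
  forall t, (s < t <= k)%N -> 0 < X t.
Proof.
move=> b_ge2 Xs Xs1 conv_ge0.
suff incr d : (s + d < k)%N ->
    0 < X (s + d)%N.+1 /\ X (s + d)%N <= X (s + d)%N.+1.
  move=> t lt_stk; have [] := incr (t.-1 - s)%N ltac:(lia).
  by rewrite (_ : (s + (t.-1 - s)).+1 = t)%N //; lia.
elim: d => [|d IH] lt_sdk; first by rewrite addn0 Xs Xs1 ltW.
have [Xd_gt0 Xd_ge] := IH ltac:(lia).
have := conv_ge0 (s + d)%N ltac:(lia) ltac:(lia).
rewrite /conv2 !addnS => conv_ge0_d.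
have : 0 <= (b - 2) * X (s + d)%N.+1 by apply: mulr_ge0; lra.
split; lra.
Qed.

Lemma conv2_le0_neg b X k f : 2 <= b -> X f.+1 = 0 -> X f < 0 ->
  (forall j, (k <= j < f)%N -> conv2 b X j <= 0) ->
  forall t, (k <= t <= f)%N -> X t < 0.
Proof.
move=> b_ge2 Xf1 Xf conv_le0 t le_ktf.
pose Y i := - X (f.+1 - i)%N.
have conv2Y j : (j < f)%N -> conv2 b Y j = - conv2 b X (f - j.+1)%N.
  move=> lt_jf; rewrite /conv2 /Y.
  have -> : (f.+1 - j.+2 = f - j.+1)%N by lia.
  have -> : (f.+1 - j.+1 = (f - j.+1).+1)%N by lia.
  have -> : (f.+1 - j = (f - j.+1).+2)%N by lia.
  ring.
rewrite -oppr_gt0 (_ : t = f.+1 - (f.+1 - t))%N; last by lia.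
apply: (@conv2_ge0_pos b Y 0 (f.+1 - k)%N); [exact: b_ge2 | | | | lia].
- by rewrite /Y subn0 Xf1 oppr0.
- by rewrite /Y subn1 oppr_gt0.
- move=> j _ lt_j; rewrite conv2Y; last by lia.
  by rewrite oppr_ge0; apply: conv_le0; lia.
Qed.

Lemma conv2_no_single_sign_change b X s m f : 2 <= b ->
  X s = 0 -> 0 < X s.+1 -> X f.+1 = 0 -> X f < 0 -> (s < f)%N ->
  (forall j, (s <= j < f)%N -> (j < m)%N -> 0 <= conv2 b X j) ->
  (forall j, (s <= j < f)%N -> (m <= j)%N -> conv2 b X j <= 0) -> False.
Proof.
move=> b_ge2 Xs Xs1 Xf1 Xf lt_sf ge0 le0.
have neg : forall t, (maxn m s <= t <= f)%N -> X t < 0.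
  by apply: (conv2_le0_neg b_ge2 Xf1 Xf) => j hj; apply: le0; lia.
case: (leqP m s) => [le_ms | lt_sm].
  by have := neg s ltac:(lia); rewrite Xs ltxx.
have pos : 0 < X (minn m f).
  apply: (conv2_ge0_pos (k := minn m f) b_ge2 Xs Xs1) => [j le_sj lt_j|].
    by apply: ge0; lia.
  by lia.
have : X (minn m f) < 0.
  by rewrite /minn; case: ltnP => [lt_mf|_]; [apply: neg; lia | exact: Xf].
by rewrite ltNge ltW.
Qed.

Lemma conv3_support_notin3 a X e f m : 3 <= a ->
  (forall k, (k < e.+3)%N -> X k = 0) -> X e.+3 != 0 ->
  (forall k, (f < k)%N -> X k = 0) -> X f != 0 ->
  ~ (forall j, conv3 a X j != 0 -> j \in [:: e; f; m]).
Proof.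
move=> a_ge3 X_lt Xe X_gt Xf supp.
wlog Xe_gt0 : X X_lt Xe X_gt Xf supp / 0 < X e.+3.
  move=> gen; case: (ltrgt0P (X e.+3)) => [|Xe_lt0|Xe0]; first exact: gen.
    apply: (gen (fun t => - X t)); rewrite ?oppr_eq0 ?oppr_gt0 //.
    - by move=> k /X_lt ->; rewrite oppr0.
    - by move=> k /X_gt ->; rewrite oppr0.
    - by move=> j; rewrite conv3N oppr_eq0; exact: supp.
  by rewrite Xe0 eqxx in Xe.
have lt_ef : (e.+2 < f)%N by rewrite ltnNge; apply: contra Xf => /X_lt ->.
have b_ge2 : 2 <= a - 1 by lra.
have conv3_eq0_off j : j != e -> j != f -> j != m -> conv3 a X j = 0.
  move=> je jf jm; apply/eqP; apply: contraTT isT => /supp.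
  by rewrite !inE (negPf je) (negPf jf) (negPf jm).
have Ue : conv2 (a - 1) X e.+1 = X e.+3.
  by rewrite /conv2 (X_lt e.+2) // (X_lt e.+1) //; ring.
have Uf : conv2 (a - 1) X f = X f.
  by rewrite /conv2 (X_gt f.+2) // (X_gt f.+1) //; ring.
have U_le_m j : (e < j <= f)%N -> (j <= m)%N -> conv2 (a - 1) X j = X e.+3.
  move=> hj le_jm; rewrite -Ue; apply: conv2_constant; first by lia.
  by move=> i hi; apply: conv3_eq0_off; lia.
have U_gt_m j : (e < j <= f)%N -> (m < j)%N -> conv2 (a - 1) X j = X f.
  move=> hj lt_mj; rewrite -Uf; symmetry; apply: conv2_constant; first by lia.
  by move=> i hi; apply: conv3_eq0_off; lia.
have [Xf_lt0 | Xf_gt0] : X f < 0 \/ 0 < X f.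
  by move: Xf; rewrite neq_lt => /orP[]; [left | right].
- apply: (conv2_no_single_sign_change (m := m.+1) b_ge2 (X_lt _ (ltnSn _))
    Xe_gt0 (X_gt _ (ltnSn _)) Xf_lt0 lt_ef).
  + by move=> j hj lt_jm; rewrite U_le_m; [exact: ltW | lia | lia].
  + by move=> j hj le_mj; rewrite U_gt_m; [exact: ltW | lia | lia].
- suff : 0 < X f.+1 by rewrite X_gt // ltxx.
  apply: (conv2_ge0_pos (k := f.+1) b_ge2 (X_lt _ (ltnSn _)) Xe_gt0);
    last by lia.
  move=> j le_ej lt_jf; have [le_jm | lt_mj] := leqP j m.
    by rewrite U_le_m; [exact: ltW | lia | lia].
  by rewrite U_gt_m; [exact: ltW | lia | lia].
Qed.

Lemma conv3_support_ge4 a X N : 3 <= a ->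
  (forall k, (k < 3)%N -> X k = 0) -> (forall k, (N <= k)%N -> X k = 0) ->
  (exists k, X k != 0) -> (4 <= #|[set i : 'I_N | conv3 a X i != 0%R]|)%N.
Proof.
move=> a_ge3 X_lt3 X_geN exX.
have X_leN k : X k != 0 -> (k <= N)%N.
  by move=> Xk; rewrite leqNgt; apply: contra Xk => /ltnW/X_geN ->.
have [e3 Xe3 min_e3] := ex_minnP exX.
have [f Xf max_f] := ex_maxnP exX X_leN.
have [e def_e3] : exists e, e3 = e.+3.
  exists (e3 - 3)%N; suff : (3 <= e3)%N by lia.
  by rewrite leqNgt; apply: contra Xe3 => /X_lt3 ->.
subst e3.
have X_lt k : (k < e.+3)%N -> X k = 0.
  by move=> lt_k; apply/eqP; apply: contraTT lt_k => /min_e3; rewrite -leqNgt.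
have X_gt k : (f < k)%N -> X k = 0.
  by move=> lt_k; apply/eqP; apply: contraTT lt_k => /max_f; rewrite -leqNgt.
have lt_ef : (e < f)%N by have := max_f _ Xe3; lia.
rewrite leqNgt; apply/negP => lt4.
have conv3_geN j : (N <= j)%N -> ~~ (conv3 a X j != 0).
  by rewrite negbK => le_Nj; apply/eqP/conv3_eq0 => k le_jk; apply: X_geN; lia.
have conv3_e : conv3 a X e = X e.+3.
  have [X0 X1 X2] : [/\ X e = 0, X e.+1 = 0 & X e.+2 = 0].
    by split; apply: X_lt; lia.
  by rewrite /conv3 X0 X1 X2; ring.
have conv3_f : conv3 a X f = - X f.
  have [X1 X2 X3] : [/\ X f.+1 = 0, X f.+2 = 0 & X f.+3 = 0].
    by split; apply: X_gt; lia.
  by rewrite /conv3 X1 X2 X3; ring.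
have [|||m supp] := card_lt4_cover (e := e) (f := f) _ conv3_geN lt4.
- by rewrite neq_ltn lt_ef.
- by rewrite conv3_e.
- by rewrite conv3_f oppr_eq0.
exact: (conv3_support_notin3 a_ge3 X_lt Xe3 X_gt Xf supp).
Qed.

(* The coefficients of z^3 v(z): the offset makes [conv3 a (pad3 v) i],
   i < n + 3, run through all the coefficients of the product. *)
Definition pad3 n (v : 'cV[R]_n) t := \sum_(j < n) (t == j.+3)%:R * v j ord0.

Lemma pad3_eq0 n (v : 'cV[R]_n) t : ~~ (3 <= t < n.+3)%N -> pad3 v t = 0.
Proof.
move=> t_out; apply: big1 => j _; have lt_jn := ltn_ord j.
by rewrite (_ : (t == j.+3) = false) ?mul0r //; lia.
Qed.

Lemma pad3_shift n (v : 'cV[R]_n) (j : 'I_n) : pad3 v j.+3 = v j ord0.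
Proof.
rewrite /pad3 (bigD1 j) //= eqxx mul1r big1 ?addr0 // => k.
move=> ne_kj; rewrite !eqSS (_ : (j == k :> nat) = false) ?mul0r //.
by rewrite eq_sym; exact: negbTE.
Qed.

Lemma pad3_neq0 n (v : 'cV[R]_n) : v != 0 -> exists k, pad3 v k != 0.
Proof.
move=> v_neq0; have [j vj] : exists j, v j ord0 != 0.
  apply/existsP; apply: contraNT v_neq0 => /existsPn v0.
  by apply/eqP/matrixP => i k; rewrite ord1 mxE; apply/eqP/negPn/v0.
by exists j.+3; rewrite pad3_shift.
Qed.

Lemma Bmx_entry n a (i : 'I_n.+3) (j : 'I_n) :
  Bmx n a i j = conv3 a (fun t => (t == j.+3)%:R) i.
Proof.
have ltjn := ltn_ord j; have ltin := ltn_ord i.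
rewrite /Bmx /Emx /conv3 !mxE !eqSS.
case: eqP => [-> | i_gt0] /=; first by rewrite eq_sym; ring.
case: eqP => [-> | i_ltn2].
  by do !case: eqP => ? /=; try (exfalso; lia); ring.
rewrite inordK; last by lia.
by rewrite /E_entry; do !case: eqP => ? /=; try (exfalso; lia); ring.
Qed.

Lemma Bmx_mulE n a (v : 'cV[R]_n) (i : 'I_n.+3) :
  (Bmx n a *m v) i ord0 = conv3 a (pad3 v) i.
Proof.
rewrite mxE /conv3 /pad3.
under eq_bigr do rewrite Bmx_entry /conv3 !mulrDl !mulNr -!mulrA.
by rewrite !big_split /= !sumrN -!mulr_sumr.
Qed.

End Convolution.

Theorem corollary5p3 (R : realFieldType) (n : nat) (a : R)
  (ha : a = 3 \/ 5 < a) :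
  row_free (Bmx n a)^T /\
  (forall v : 'cV[R]_n, v != 0 ->
     leq 4 #|[set i : 'I_n.+3 | (Bmx n a *m v) i ord0 != 0]|).
Proof.
have a_ge3 : 3 <= a by case: ha => [->|]; lra.
have supp_ge4 (v : 'cV[R]_n) : v != 0 ->
    leq 4 #|[set i : 'I_n.+3 | (Bmx n a *m v) i ord0 != 0]|.
  move=> v_neq0; under eq_finset do rewrite Bmx_mulE.
  apply: conv3_support_ge4 a_ge3 _ _ (pad3_neq0 v_neq0) => k k_out;
    by apply: pad3_eq0; lia.
split=> //; apply/inj_row_free => u uBT0.
have Bu0 : Bmx n a *m u^T = 0 by rewrite -[Bmx n a]trmxK -trmx_mul uBT0 trmx0.
apply/trmx_inj/eqP; rewrite trmx0; apply: contraT => /supp_ge4.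
rewrite Bu0 (_ : [set _ | _] = set0) ?cards0 //.
by apply/setP => i; rewrite !inE mxE eqxx.
Qed.
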